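(* Let $\tau\in\mathcal{T}$. Let $\mathbf{k}(\tau)$ be the number of edges of $\tau$ labelled $I'$ and $\mathbf{l}(\tau)$ the number of leaves of $\tau$. Then $\mathbf{l}(\tau)+\mathbf{k}(\tau)$ is odd.
   Context: $\mathcal{T}$ is the smallest set of rooted trees with edges labelled $I$ or $I'$ containing the single-vertex tree $\bullet$ and such that for $\tau_1,\tau_2,\tau_3\in\mathcal{T}$ the tree $I(\tau_1)I(\tau_2)I(\tau_3)$ (a new root joined to the roots of $\tau_1,\tau_2,\tau_3$ by edges labelled $I$) is in $\mathcal{T}$, and for $\tau_1,\tau_2\in\mathcal{T}$ the tree $I(\tau_1)I'(\tau_2)$ (a new root joined to the root of $\tau_1$ by an $I$-edge and to the root of $\tau_2$ by an $I'$-edge) is in $\mathcal{T}$. A leaf is a non-root vertex of degree 1, or the root of the single-vertex tree. *)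

From Stdlib Require Import Arith List.
Import ListNotations.

Inductive label := LI | LI'.

Inductive rtree : Type :=
  | Node : list (label * rtree) -> rtree.

(* Membership in the class T: the smallest set containing the single-vertex
   tree and closed under I(t1)I(t2)I(t3) and I(t1)I'(t2). *)
Inductive inT : rtree -> Prop :=
  | inT_leaf : inT (Node [])
  | inT_III : forall t1 t2 t3, inT t1 -> inT t2 -> inT t3 ->
      inT (Node [(LI, t1); (LI, t2); (LI, t3)])
  | inT_II' : forall t1 t2, inT t1 -> inT t2 ->
      inT (Node [(LI, t1); (LI', t2)]).

Fixpoint kI' (t : rtree) : nat :=
  match t with
  | Node cs =>
      (fix go (l : list (label * rtree)) : nat :=
         match l with
         | [] => 0
         | (lab, c) :: r =>
             (match lab with LI' => 1 | LI => 0 end) + kI' c + go r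
         end) cs
  end.

(* number of leaves of a subtree hanging below a parent edge: a non-root
   vertex has degree (#children + 1), so it is a leaf iff it has no children *)
Fixpoint nonroot_leaves (t : rtree) : nat :=
  match t with
  | Node cs =>
      (match cs with [] => 1 | _ => 0 end) +
      (fix go (l : list (label * rtree)) : nat :=
         match l with
         | [] => 0
         | (_, c) :: r => nonroot_leaves c + go r
         end) cs
  end.

(* leaves of a rooted tree: non-root vertices of degree 1, plus the root
   if the tree is the single-vertex tree (root degree = #children). *)
Definition leaves (t : rtree) : nat :=
  match t with
  | Node cs =>
      (match cs with [] => 1 | _ => 0 end) +
      (fix go (l : list (label * rtree)) : nat :=
         match l with
         | [] => 0
         | (_, c) :: r => nonroot_leaves c + go r
         end) cs
  end.

From Stdlib Require Import Arith Lia List.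
Import ListNotations.

(* Counting leaves below the root, l + k is additive over the subtrees hanging
   from the root, plus one for each I'-edge there.  A vertex I(t1)I(t2)I(t3)
   thus sums three odd numbers, and I(t1)I'(t2) two odd numbers plus one. *)

Lemma leaves_nonroot_leaves (t : rtree) : leaves t = nonroot_leaves t.
Proof. now destruct t. Qed.

Lemma odd_nonroot_leaves_add_kI' (t : rtree) :
  inT t -> Nat.odd (nonroot_leaves t + kI' t) = true.
Proof.
  induction 1 as [| t1 t2 t3 _ IH1 _ IH2 _ IH3 | t1 t2 _ IH1 _ IH2];
    [reflexivity | |].
  - replace (nonroot_leaves (Node [(LI, t1); (LI, t2); (LI, t3)])
             + kI' (Node [(LI, t1); (LI, t2); (LI, t3)]))
      with ((nonroot_leaves t1 + kI' t1) + (nonroot_leaves t2 + kI' t2)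
            + (nonroot_leaves t3 + kI' t3)) by (simpl; lia).
    now rewrite Nat.odd_add, IH3, Nat.odd_add, IH1, IH2.
  - replace (nonroot_leaves (Node [(LI, t1); (LI', t2)])
             + kI' (Node [(LI, t1); (LI', t2)]))
      with (1 + (nonroot_leaves t1 + kI' t1) + (nonroot_leaves t2 + kI' t2))
      by (simpl; lia).
    now rewrite Nat.odd_add, IH2, Nat.odd_add, IH1.
Qed.

Theorem lemma3p25 (t : rtree) (ht : inT t) : Nat.odd (leaves t + kI' t) = true.
Proof.
  rewrite leaves_nonroot_leaves.
  exact (odd_nonroot_leaves_add_kI' t ht).
Qed.
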